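(* Let $\Gamma$ be a splice diagram satisfying the edge determinant and semigroup conditions and let $(F_{v,i})$ be a splice type system for $\Gamma$. For each pair of nodes $u,v$ of $\Gamma$ and each $i\in\{1,\dots,\delta_v-2\}$: if $u=v$ then $\mathrm{in}_{w_u}(F_{v,i})=f_{v,i}$; otherwise $\mathrm{in}_{w_u}(F_{v,i})=f_{v,i}-c_{v,e,i}\,z^{m_{v,e}}$, where $e$ is the unique edge adjacent to $v$ with $e\subseteq[v,u]$.
   Context: A splice diagram is a finite tree $\Gamma$ with at least one vertex of valency $\geq3$ and no vertex of valency $2$; vertices of valency $1$ are leaves, others nodes; $\delta_v$ is the valency of $v$. For each node $v$ and edge $e$ at $v$ a positive integer weight $d_{v,e}$ is given; $d_v=\prod_{e\ni v}d_{v,e}$. For distinct vertices $u,v$, $\ell_{u,v}$ is the product of all $d_{w,e}$ with $w$ a node on the geodesic $[u,v]$ and $e$ an edge at $w$ not in $[u,v]$; $\ell_{v,v}:=d_v$. Edge determinant condition: $d_{u,v}d_{v,u}>\ell_{u,v}$ for each edge $[u,v]$ between two nodes (where $d_{u,v}$ is the weight at $u$ of the edge toward $v$). Semigroup condition: for each node $v$ and edge $e$ at $v$, $d_v\in\sum_{\lambda\in L(v,e)}\mathbb{N}\ell_{v,\lambda}$ with $L(v,e)$ the leaves $\lambda$ with $e\subseteq[v,\lambda]$. With variables $z_\lambda$ and basis vectors $w_\lambda$ of $\mathbb{R}^n$ indexed by the $n$ leaves, $w_u=\sum_\lambda\ell_{u,\lambda}w_\lambda$ for nodes $u$. Fix $\alpha_{v,e,\lambda}\in\mathbb{N}$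 with $d_v=\sum_{\lambda\in L(v,e)}\alpha_{v,e,\lambda}\ell_{v,\lambda}$, $m_{v,e}=\sum\alpha_{v,e,\lambda}w_\lambda$, $z^{m_{v,e}}=\prod z_\lambda^{\alpha_{v,e,\lambda}}$. A splice type system consists of $F_{v,i}=f_{v,i}+g_{v,i}$ ($v$ node, $1\le i\le\delta_v-2$) with $f_{v,i}=\sum_{e\ni v}c_{v,e,i}z^{m_{v,e}}$, all maximal minors of $(c_{v,e,i})_{e,i}$ nonzero, and $g_{v,i}\in\mathbb{C}\{z_\lambda\}$ whose exponents $m$ all satisfy $w_v\cdot m>d_v$ and $w_u\cdot m>\ell_{u,v}$ for nodes $u\neq v$. For $w\in\mathbb{R}_{\ge0}^n$, $\mathrm{in}_w(F)$ is the sum of the terms of $F$ of minimal $w$-weight. *)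

From HB Require Import structures.
From mathcomp Require Import all_boot all_order all_algebra.
From Stdlib Require Import ClassicalEpsilon.

Set Implicit Arguments.
Unset Strict Implicit.
Unset Printing Implicit Defensive.

Import Order.TTheory GRing.Theory Num.Theory.

Section Tree.
Variables (V : finType) (adj : rel V).

Definition is_tree : Prop :=
  [/\ symmetric adj, irreflexive adj, (forall u v, connect adj u v) &
      (forall u p q, path adj u p -> path adj u q ->
         uniq (u :: p) -> uniq (u :: q) -> last u p = last u q -> p = q)].

Definition valency (v : V) : nat := #|[set x | adj v x]|.
Definition is_leaf (v : V) : bool := valency v == 1%N.
Definition is_node (v : V) : bool := (3 <= valency v)%N.

(* the neighbours of v, i.e. the edges at v (edge [v,x] <-> neighbour x) *)
Definition nbrs (v : V) : seq V := enum [set x | adj v x].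

Definition geod (u v w : V) : Prop :=
  exists p : seq V, [/\ path adj u p, last u p = v, uniq (u :: p) & w \in u :: p].

Definition geodb (u v w : V) : bool :=
  if excluded_middle_informative (geod u v w) then true else false.

Definition is_splice_diagram : Prop :=
  [/\ is_tree, exists v, is_node v & forall v, valency v != 2%N].

(* variables are indexed by the leaves *)
Definition leafT := {l : V | is_leaf l}.
Definition expo := {ffun leafT -> nat}.

Variable d : V -> V -> nat.  (* d v x = d_{v,e} for the edge e = [v,x] *)

Definition dv (v : V) : nat := (\prod_(x | adj v x) d v x)%N.

(* l_{u,v}: product of d_{w,e} over nodes w on [u,v] and edges e = [w,x]
   at w not contained in [u,v] (i.e. x not on [u,v]); l_{v,v} = d_v. *)
Definition ell (u v : V) : nat :=
  if u == v then dv u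
  else (\prod_(w | is_node w && geodb u v w)
          \prod_(x | adj w x && ~~ geodb u v x) d w x)%N.

Definition edge_det_cond : Prop :=
  forall u v, is_node u -> is_node v -> adj u v -> (ell u v < d u v * d v u)%N.

(* L(v,e) for e = [v,x]: leaves l with e contained in [v,l], i.e. x on [v,l] *)
Definition semigroup_cond : Prop :=
  forall v x, is_node v -> adj v x ->
    exists a : V -> nat,
      dv v = (\sum_(l | is_leaf l && geodb v l x) a l * ell v l)%N.

(* the weight vector w_u = sum_l l_{u,l} w_l *)
Definition wvec (u : V) : leafT -> nat := fun l => ell u (val l).

End Tree.
Arguments wvec [V] adj d u _.

Section PSeries.
Variables (I : finType) (C : numClosedFieldType).
Local Open Scope ring_scope.

(* a power series = its coefficient function on exponent vectors *)
Definition pser := {ffun I -> nat} -> C.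

Definition wdot (w : I -> nat) (m : {ffun I -> nat}) : nat :=
  (\sum_i w i * m i)%N.

Definition pmono (m : {ffun I -> nat}) : pser :=
  fun m' => if m' == m then 1 else 0.

(* convergent power series (positive polyradius): Cauchy-type bound *)
Definition convergent (g : pser) : Prop :=
  exists rho M : C, 0 < rho /\
    forall m, `|g m| * rho ^+ (\sum_i m i)%N <= M.

Definition initial (w : I -> nat) (F : pser) : pser :=
  fun m =>
    if excluded_middle_informative
         (F m != 0 /\ forall m', F m' != 0 -> (wdot w m <= wdot w m')%N)
    then F m else 0.

End PSeries.
Arguments pmono {I C} m _.

Section SpliceSystem.
Variables (V : finType) (adj : rel V) (d : V -> V -> nat)
          (C : numClosedFieldType).
Local Open Scope ring_scope.

(* alpha a v x l = alpha_{v,e,l} for e = [v,x];  m_{v,e} = sum alpha w_l *)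
Definition mexp (a : V -> V -> V -> nat) (v x : V) : expo adj :=
  [ffun l : leafT adj => if geodb adj v (val l) x then a v x (val l) else 0%N].

Definition alpha_cond (a : V -> V -> V -> nat) : Prop :=
  forall v x, is_node adj v -> adj v x ->
    dv adj d v = (\sum_(l : leafT adj | geodb adj v (val l) x)
                    a v x (val l) * ell adj d v (val l))%N.

(* c v x i = c_{v,e,i} (e = [v,x], i 0-based: i < delta_v - 2).
   All maximal minors of the delta_v x (delta_v - 2) matrix are nonzero. *)
Definition minors_cond (c : V -> V -> nat -> C) : Prop :=
  forall v, is_node adj v ->
    forall f : 'I_(valency adj v - 2) -> 'I_(valency adj v), injective f ->
      \det (\matrix_(r, s) c v (nth v (nbrs adj v) (f r)) s) != 0.

Definition g_cond (a : V -> V -> V -> nat) (g : V -> nat -> pser (leafT adj) C) : Prop :=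
  forall v i, is_node adj v -> (i < valency adj v - 2)%N ->
    convergent (g v i) /\
    forall m, g v i m != 0 ->
      (dv adj d v < wdot (wvec adj d v) m)%N /\
      forall u, is_node adj u -> u != v -> (ell adj d u v < wdot (wvec adj d u) m)%N.

Definition fpart (c : V -> V -> nat -> C) (a : V -> V -> V -> nat) (v : V) (i : nat)
  : pser (leafT adj) C :=
  fun m => \sum_(x | adj v x) c v x i * pmono (mexp a v x) m.

Definition Fsys (c : V -> V -> nat -> C) (a : V -> V -> V -> nat)
  (g : V -> nat -> pser (leafT adj) C) (v : V) (i : nat) : pser (leafT adj) C :=
  fun m => fpart c a v i m + g v i m.

Definition is_splice_type_system (c : V -> V -> nat -> C) (a : V -> V -> V -> nat)
  (g : V -> nat -> pser (leafT adj) C) : Prop :=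
  [/\ alpha_cond a, minors_cond c & g_cond a g].

End SpliceSystem.
Arguments fpart [V] adj [C] c a v i _.
Arguments Fsys [V] adj [C] c a g v i _.

(** The weight of [z^{m_{v,e}}] for [w_u] is computed from the multiplicativity
    [l_{x,z} d_y = l_{x,y} l_{y,z}] for a node [y] on [[x,z]]: it is [d_v] when
    [u = v], and [l_{u,v}] for every edge [e] at [v] not pointing towards [u].  For
    the edge pointing towards [u], the edge determinant condition, propagated along
    [[v,u]] by induction, makes it strictly larger.  The terms of [g_{v,i}] lie above
    these weights by assumption, and the nonvanishing minors give [f_{v,i}] a nonzero
    coefficient off any prescribed edge, so the minimal weight is attained. *)

From HB Require Import structures.
From mathcomp Require Import all_boot all_order all_algebra.
From Stdlib Require Import ClassicalEpsilon FunctionalExtensionality.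
From mathcomp Require Import zify.
Import Order.TTheory GRing.Theory Num.Theory.

Set Implicit Arguments.
Unset Strict Implicit.
Unset Printing Implicit Defensive.

Lemma ltn_sum_scaled (I : finType) (P : pred I) (A X Y : I -> nat) :
  (forall i, P i -> Y i < X i) -> 0 < \sum_(i | P i) A i ->
  \sum_(i | P i) A i * Y i < \sum_(i | P i) A i * X i.
Proof.
move=> ltYX; rewrite lt0n sum_nat_eq0 => /forall_inPn[i Pi Ai_neq0].
rewrite (bigD1 i Pi) [X in _ < X](bigD1 i Pi) /= -addSn.
apply: leq_add; first by rewrite ltn_mul2l lt0n Ai_neq0 ltYX.
by apply: leq_sum => j /andP[Pj _]; rewrite leq_mul2l ltnW ?orbT // ltYX.
Qed.

Lemma exists_inj_avoid k n j0 : k < n ->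
  exists f : 'I_k -> 'I_n, injective f /\ forall r, val (f r) != j0.
Proof.
move=> lt_kn.
have bump_lt (r : 'I_k) : bump j0 r < n.
  apply: leq_trans lt_kn; rewrite /bump.
  by case: (j0 <= r); [exact: ltn_ord | exact: ltnW (ltn_ord r)].
exists (fun r => Ordinal (bump_lt r)); split=> [r1 r2 /(congr1 val) /= eq_r|r].
  exact: val_inj (can_inj (bumpK j0) eq_r).
by rewrite eq_sym neq_bump.
Qed.

Section InitialForm.
Variables (I : finType) (C : numClosedFieldType) (w : I -> nat).
Local Open Scope ring_scope.

Lemma initial_homog_add (f h : pser I C) (mu : nat) :
  (forall m, f m != 0 -> wdot w m = mu) -> (exists m, f m != 0) ->
  (forall m, h m != 0 -> (mu < wdot w m)%N) ->
  initial w (fun m => f m + h m) = f.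
Proof.
move=> f_homog [m0 fm0_neq0] h_above.
have h0 m : (wdot w m <= mu)%N -> h m = 0.
  by move=> le_m; apply/eqP; apply: contraTT le_m => /h_above; rewrite -ltnNge.
have F_above m : f m + h m != 0 -> (mu <= wdot w m)%N.
  case: (eqVneq (f m) 0) => [-> | /f_homog -> //]; rewrite add0r.
  by move/h_above/ltnW.
have wm0 := f_homog _ fm0_neq0.
apply: functional_extensionality => m; rewrite /initial.
case: excluded_middle_informative => [[? min_m] | not_min] /=.
  rewrite (h0 m) ?addr0 // -wm0; apply: min_m.
  by rewrite (h0 m0) ?wm0 // addr0.
apply/esym/eqP/(contra_notT _ not_min) => fm_neq0.
have wm := f_homog _ fm_neq0.
by rewrite (h0 m) ?wm // addr0; split=> // m' /F_above; rewrite wm.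
Qed.

End InitialForm.

Section Geodesics.
Variables (V : finType) (adj : rel V).
Hypothesis tree : is_tree adj.

Let adjC : symmetric adj. Proof. by case: tree. Qed.
Let adj_irr : irreflexive adj. Proof. by case: tree. Qed.
Let adj_connect u v : connect adj u v. Proof. by case: tree. Qed.
Let simple_path_unique u p q : path adj u p -> path adj u q ->
  uniq (u :: p) -> uniq (u :: q) -> last u p = last u q -> p = q.
Proof. by case: tree => _ _ _; apply. Qed.

Definition simple_pathb u v (p : seq V) :=
  [&& path adj u p, last u p == v & uniq (u :: p)].

Lemma simple_path_exists u v : exists p, simple_pathb u v p.
Proof.
have /connectP [p p_path p_last] := adj_connect u v.
case: (shortenP p_path) p_last => p' p'_path p'_uniq _ p'_last.
by exists p'; rewrite /simple_pathb p'_path p'_uniq -p'_last eqxx.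
Qed.

Definition gpath u v : seq V := xchoose (simple_path_exists u v).

Definition seg u v : seq V := u :: gpath u v.

Definition first_step v u : V := head v (gpath v u).

Lemma gpathP u v :
  [/\ path adj u (gpath u v), last u (gpath u v) = v & uniq (u :: gpath u v)].
Proof. by have /and3P[? /eqP ? ?] := xchooseP (simple_path_exists u v). Qed.

Lemma gpath_unique u v p :
  path adj u p -> last u p = v -> uniq (u :: p) -> p = gpath u v.
Proof.
move=> p_path p_last p_uniq; have [g_path g_last g_uniq] := gpathP u v.
by apply: simple_path_unique p_path g_path p_uniq g_uniq _; rewrite p_last g_last.
Qed.

Lemma geodP u v w : geod adj u v w <-> w \in seg u v.
Proof.
split=> [[p [p_path p_last p_uniq w_p]] | w_seg].
  by rewrite /seg -(gpath_unique p_path p_last p_uniq).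
by have [] := gpathP u v; exists (gpath u v).
Qed.

Lemma geodbE u v w : geodb adj u v w = (w \in seg u v).
Proof.
rewrite /geodb; case: excluded_middle_informative => [/geodP -> // | not_geod].
by apply/esym/negP => /geodP.
Qed.

Lemma mem_seg_l u v : u \in seg u v.
Proof. exact: mem_head. Qed.

Lemma mem_seg_r u v : v \in seg u v.
Proof. by have [_ g_last _] := gpathP u v; rewrite /seg -{1}g_last mem_last. Qed.

Lemma gpath_id u : gpath u u = [::].
Proof. exact/esym/gpath_unique. Qed.

Lemma gpath_adj u v : adj u v -> gpath u v = [:: v].
Proof.
move=> uv; apply/esym/gpath_unique => //=; first by rewrite uv.
by rewrite inE andbT; apply: contraTneq uv => ->; rewrite adj_irr.
Qed.

Lemma gpath_cat x y z : y \in seg x z -> gpath x z = gpath x y ++ gpath y z.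
Proof.
rewrite /seg => y_xz; have [] := gpathP x z.
move: (gpath x z) y_xz => p y_p p_path p_last p_uniq.
case/splitPl: y_p p_path p_last p_uniq => p1 p2 p1_last p_path p_last p_uniq.
move: p_path; rewrite cat_path p1_last => /andP[p1_path p2_path].
move: p_last; rewrite last_cat p1_last => p2_last.
move: p_uniq; rewrite -cat_cons cat_uniq => /and3P[p1_uniq disj p2_uniq].
have y_p2 : y \notin p2.
  by apply: contra disj => y_p2; apply/hasP; exists y; rewrite // -p1_last mem_last.
by rewrite -(gpath_unique p1_path p1_last p1_uniq) -(gpath_unique p2_path p2_last) //= y_p2.
Qed.

Lemma seg_cat x y z : y \in seg x z -> seg x z = seg x y ++ gpath y z.
Proof. by move=> y_xz; rewrite /seg (gpath_cat y_xz). Qed.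

Lemma mem_segC x z w : (w \in seg z x) = (w \in seg x z).
Proof.
have [] := gpathP x z; rewrite /seg; move: (gpath x z) => p p_path <- p_uniq.
have rev_path : rev (belast x p) = gpath (last x p) x.
  apply: gpath_unique.
  - by rewrite rev_path; apply: sub_path p_path => s t /=; rewrite adjC.
  - by case: p {p_path p_uniq} => //= t p; rewrite rev_cons last_rcons.
  - by rewrite -rev_rcons -lastI rev_uniq.
by rewrite -rev_path -rev_rcons -lastI mem_rev.
Qed.

Lemma mem_seg_cat_eq x y z w :
  y \in seg x z -> w \in seg x y -> w \in seg y z -> w = y.
Proof.
move=> y_xz; have [_ _] := gpathP x z; rewrite -/(seg x z) (seg_cat y_xz) cat_uniq.
case/and3P=> _ disj _ w_xy; rewrite inE => /orP[/eqP // | w_yz].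
by case/negP: disj; apply/hasP; exists w.
Qed.

Lemma mem_seg_split x y z w : y \in seg x z ->
  (w \in seg x z) = (w \in seg x y) || (w \in seg y z).
Proof.
move=> y_xz; rewrite (seg_cat y_xz) mem_cat [w \in seg y z]in_cons.
by case: eqP => [-> | _]; rewrite ?mem_seg_r.
Qed.

Lemma adj_seg_cross x y z w t : y \in seg x z -> w \in seg x y -> w != y ->
  adj w t -> t \in seg y z -> t = y.
Proof.
move=> y_xz w_xy w_neq_y wt t_yz.
have ty_yz s : s \in seg t y -> s \in seg y z.
  by rewrite mem_segC => s_yt; rewrite (mem_seg_split _ t_yz) s_yt.
have w_ty : w \notin seg t y.
  by apply: contra w_neq_y => /ty_yz w_yz; rewrite (mem_seg_cat_eq y_xz w_xy w_yz).
have [ty_path ty_last ty_uniq] := gpathP t y.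
have wty : t :: gpath t y = gpath w y.
  by apply: gpath_unique; rewrite //= ?wt ?ty_path // w_ty.
apply: (mem_seg_cat_eq y_xz) t_yz.
by rewrite (mem_seg_split _ w_xy) /seg -wty !inE eqxx !orbT.
Qed.

Lemma gpath_neq_nil u v : u != v -> gpath u v != [::].
Proof.
have [_ g_last _] := gpathP u v.
by apply: contraNneq => g_nil; rewrite -g_last g_nil.
Qed.

Lemma first_step_adj v u : v != u -> adj v (first_step v u).
Proof.
move/gpath_neq_nil; have [g_path _ _] := gpathP v u.
by rewrite /first_step; case: (gpath v u) g_path => //= t p /andP[].
Qed.

Lemma mem_first_step v u : v != u -> first_step v u \in seg v u.
Proof.
by move/gpath_neq_nil; rewrite /first_step /seg; case: (gpath v u) => //= t p;
  rewrite !inE eqxx orbT.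
Qed.

Lemma first_step_sub v t l : v != t -> t \in seg v l -> first_step v l = first_step v t.
Proof.
move=> v_neq_t t_vl; rewrite /first_step (gpath_cat t_vl).
by case: (gpath v t) (gpath_neq_nil v_neq_t).
Qed.

Lemma first_step_eq v x l : adj v x -> x \in seg v l -> first_step v l = x.
Proof.
move=> vx x_vl; have v_neq_x : v != x by apply: contraTneq vx => ->; rewrite adj_irr.
by rewrite (first_step_sub v_neq_x x_vl) /first_step gpath_adj.
Qed.

Lemma mem_seg_first_step v a b :
  first_step v a != first_step v b -> v \in seg a b.
Proof.
move=> neq_step; have [av_path av_last av_uniq] := gpathP a v.
have [vb_path vb_last vb_uniq] := gpathP v b.
rewrite /seg; suff <- : gpath a v ++ gpath v b = gpath a b.
  by rewrite -cat_cons mem_cat mem_seg_r.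
apply: gpath_unique; first by rewrite cat_path av_path av_last vb_path.
  by rewrite last_cat av_last.
rewrite -cat_cons cat_uniq av_uniq /=; move: vb_uniq => /= /andP[v_vb ->].
rewrite andbT; apply/hasP => -[t t_gvb t_av].
have v_neq_t : v != t by apply/eqP => eq_vt; rewrite {1}eq_vt t_gvb in v_vb.
have t_va : t \in seg v a by rewrite mem_segC.
have t_vb : t \in seg v b by rewrite inE t_gvb orbT.
by rewrite (first_step_sub v_neq_t t_va) (first_step_sub v_neq_t t_vb) eqxx in neq_step.
Qed.

Lemma first_step_valency v u : v != u -> first_step v u != u ->
  2 <= valency adj (first_step v u).
Proof.
move=> v_neq_u; have [] := gpathP v u; rewrite /first_step /seg.
case: (gpath v u) => [_ u_v | t [|s p]] /=.
- by move: v_neq_u; rewrite -u_v /= eqxx.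
- by move=> _ -> _; rewrite eqxx.
move=> /and3P[vt ts _] _ /andP[v_notin _] _.
have v_neq_s : v != s by apply: contraNneq v_notin => ->; rewrite !inE eqxx orbT.
have card_vs : #|[set v; s]| = 2 by rewrite cards2 v_neq_s.
rewrite /valency -card_vs; apply: subset_leq_card.
by apply/subsetP => r; rewrite !inE => /orP[] /eqP ->; rewrite // adjC.
Qed.

Section LinkingNumbers.
Variable d : V -> V -> nat.
Hypothesis d_gt0 : forall v x, is_node adj v -> adj v x -> 0 < d v x.

Local Notation ell := (ell adj d).
Local Notation dv := (dv adj d).

Definition dpow (k : V -> V -> nat) : nat := \prod_w \prod_t d w t ^ k w t.

Lemma dpowD k1 k2 : dpow k1 * dpow k2 = dpow (fun w t => k1 w t + k2 w t).
Proof.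
rewrite /dpow -big_split; apply: eq_bigr => w _.
by rewrite -big_split; apply: eq_bigr => t _; rewrite expnD.
Qed.

Lemma eq_dpow k1 k2 : (forall w t, k1 w t = k2 w t) -> dpow k1 = dpow k2.
Proof. by move=> eq_k; apply: eq_bigr => w _; apply: eq_bigr => t _; rewrite eq_k. Qed.

Lemma ellE x z : x != z -> ell x z =
  dpow (fun w t => [&& is_node adj w, adj w t, w \in seg x z & t \notin seg x z]).
Proof.
move=> x_neq_z; rewrite /ell (negbTE x_neq_z) big_mkcond; apply: eq_bigr => w _.
rewrite geodbE; case: (is_node adj w); case: (w \in seg x z) => /=.
- rewrite big_mkcond; apply: eq_bigr => t _; rewrite geodbE.
  by case: (adj w t); case: (t \in seg x z).
all: by rewrite big1 // => t _; rewrite ?andbF.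
Qed.

Lemma dvE y : is_node adj y -> dv y = dpow (fun w t => [&& is_node adj w, adj w t & w == y]).
Proof.
move=> y_node; rewrite /dpow (bigD1 y) //= [X in _ = _ * X]big1 ?muln1 => [|w w_neq_y].
  rewrite /dv big_mkcond; apply: eq_bigr => t _.
  by rewrite y_node eqxx /=; case: (adj y t); rewrite ?expn1.
by apply: big1 => t _; rewrite (negbTE w_neq_y) !andbF expn0.
Qed.

Lemma dE p q : d p q = dpow (fun w t => (w == p) && (t == q)).
Proof.
rewrite /dpow (bigD1 p) //= [X in _ = _ * X]big1 ?muln1 => [|w w_neq_p]; last first.
  by apply: big1 => t _; rewrite (negbTE w_neq_p) expn0.
rewrite (bigD1 q) //= [X in _ = _ * X]big1 ?muln1 ?eqxx ?expn1 // => t t_neq_q.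
by rewrite (negbTE t_neq_q) andbF expn0.
Qed.

Lemma ell_id x : ell x x = dv x.
Proof. by rewrite /ell eqxx. Qed.

Lemma dv_gt0 v : is_node adj v -> 0 < dv v.
Proof. by move=> v_node; apply: prodn_cond_gt0 => x; apply: d_gt0. Qed.

Lemma ell_gt0 x z : is_node adj x -> 0 < ell x z.
Proof.
move=> x_node; case: (eqVneq x z) => [<- | x_neq_z]; first by rewrite ell_id dv_gt0.
rewrite /ell (negbTE x_neq_z); apply: prodn_cond_gt0 => w /andP[w_node _].
by apply: prodn_cond_gt0 => t /andP[wt _]; apply: d_gt0.
Qed.

Lemma ellC x z : ell x z = ell z x.
Proof.
case: (eqVneq x z) => [-> // | x_neq_z].
rewrite (ellE x_neq_z) ellE 1?eq_sym //.
by apply: eq_dpow => w t; rewrite !(mem_segC x z).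
Qed.

Lemma ell_mul x y z : is_node adj y -> y \in seg x z ->
  ell x z * dv y = ell x y * ell y z.
Proof.
move=> y_node y_xz.
case: (eqVneq x z) => [eq_xz | x_neq_z].
  by move: y_xz; rewrite -eq_xz /seg gpath_id inE => /eqP ->; rewrite ell_id.
case: (eqVneq x y) => [<- | x_neq_y]; first by rewrite ell_id mulnC.
case: (eqVneq y z) => [<- | y_neq_z]; first by rewrite ell_id.
rewrite (ellE x_neq_z) (ellE x_neq_y) (ellE y_neq_z) (dvE y_node) !dpowD.
apply: eq_dpow => w t /=.
case: (is_node adj w) => //=; case wt: (adj w t) => //=.
have meet_w : (w \in seg x y) && (w \in seg y z) = (w == y).
  by apply/idP/eqP => [/andP[] | ->]; [apply: mem_seg_cat_eq | rewrite mem_seg_r mem_seg_l].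
have meet_t : (t \in seg x y) && (t \in seg y z) = (t == y).
  by apply/idP/eqP => [/andP[] | ->]; [apply: mem_seg_cat_eq | rewrite mem_seg_r mem_seg_l].
have not_loop : ~~ ((w == y) && (t == y)).
  by apply: contraL wt => /andP[/eqP -> /eqP ->]; rewrite adj_irr.
have cross_l : (w \in seg x y) && (w != y) && (t \in seg y z) ==> (t == y).
  by apply/implyP => /andP[/andP[w_xy w_neq_y] t_yz]; apply/eqP/(adj_seg_cross y_xz w_xy).
have cross_r : (w \in seg y z) && (w != y) && (t \in seg x y) ==> (t == y).
  apply/implyP => /andP[/andP[w_yz w_neq_y] t_xy].
  by apply/eqP/(@adj_seg_cross z y x w t); rewrite // mem_segC.
rewrite (mem_seg_split w y_xz) (mem_seg_split t y_xz).
move: meet_w meet_t not_loop cross_l cross_r.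
by case: (w \in seg x y); case: (w \in seg y z); case: (t \in seg x y);
  case: (t \in seg y z); case: (w == y); case: (t == y).
Qed.

Lemma ell_adj p q : adj p q -> is_node adj p -> is_node adj q ->
  ell p q * (d p q * d q p) = dv p * dv q.
Proof.
move=> pq p_node q_node.
have p_neq_q : p != q by apply: contraTneq pq => ->; rewrite adj_irr.
rewrite (ellE p_neq_q) /seg (gpath_adj pq) (dE p q) (dE q p) (dvE p_node) (dvE q_node).
rewrite !dpowD; apply: eq_dpow => w t /=; rewrite !inE.
have wp_node : (w == p) ==> is_node adj w by apply/implyP => /eqP ->.
have wq_node : (w == q) ==> is_node adj w by apply/implyP => /eqP ->.
have pq_adj : (w == p) && (t == q) ==> adj w t by apply/implyP => /andP[/eqP -> /eqP ->].
have qp_adj : (w == q) && (t == p) ==> adj w t.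
  by apply/implyP => /andP[/eqP -> /eqP ->]; rewrite adjC.
have w_pq : ~~ ((w == p) && (w == q)).
  by apply: contraNN p_neq_q => /andP[/eqP <- /eqP <-].
have t_pq : ~~ ((t == p) && (t == q)).
  by apply: contraNN p_neq_q => /andP[/eqP <- /eqP <-].
move: wp_node wq_node pq_adj qp_adj w_pq t_pq.
case: (eqVneq w t) => [-> | w_neq_t].
  by rewrite adj_irr; case: (is_node adj t); case: (t == p); case: (t == q).
have not_pp : ~~ ((w == p) && (t == p)).
  by apply: contraNN w_neq_t => /andP[/eqP -> /eqP ->].
have not_qq : ~~ ((w == q) && (t == q)).
  by apply: contraNN w_neq_t => /andP[/eqP -> /eqP ->].
move: not_pp not_qq.
by case: (is_node adj w); case: (adj w t); case: (w == p); case: (w == q);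
  case: (t == p); case: (t == q).
Qed.

Hypothesis edge_det : edge_det_cond adj d.

Lemma ell_edge_lt p q : adj p q -> is_node adj p -> is_node adj q ->
  ell p q * ell q p < dv p * dv q.
Proof.
move=> pq p_node q_node; rewrite [ell q p]ellC -(ell_adj pq p_node q_node).
by rewrite ltn_pmul2l ?ell_gt0 ?edge_det.
Qed.

Hypothesis no_valency2 : forall v, valency adj v != 2.

Lemma first_step_node v u : is_node adj u -> v != u -> is_node adj (first_step v u).
Proof.
move=> u_node v_neq_u; case: (eqVneq (first_step v u) u) => [-> // | e_neq_u].
have := first_step_valency v_neq_u e_neq_u; have := no_valency2 (first_step v u).
by rewrite /is_node leq_eqVlt eq_sym => /negbTE ->.
Qed.

Lemma ell_mul_lt_step u v e l : is_node adj v ->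
  adj v e -> is_node adj e -> ~~ is_node adj l -> e \in seg v u -> e \in seg v l ->
  ell u e * ell e l <= ell u l * dv e -> ell u v * ell v l < ell u l * dv v.
Proof.
move=> v_node ve e_node l_leaf e_vu e_vl le_e.
have dve_gt0 := dv_gt0 e_node.
have e_neq_l : e != l by apply: contraNneq l_leaf => <-.
have ell_el_gt0 := ell_gt0 l e_node.
have ell_ue_gt0 : 0 < ell u e by rewrite ellC ell_gt0.
have split_vl := ell_mul e_node e_vl.
have split_uv : ell u v * dv e = ell u e * ell e v by rewrite ell_mul // mem_segC.
have lt_e : ell e v * ell v e < dv e * dv v by rewrite ell_edge_lt // adjC.
have dve2_gt0 : 0 < dv e * dv e by rewrite muln_gt0 dve_gt0.
(* [l_{u,v} l_{v,l} d_e^2 = (l_{u,e} l_{e,l}) (l_{e,v} l_{v,e})] *)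
rewrite -(ltn_pmul2r dve2_gt0) mulnACA split_uv split_vl.
apply: (@leq_trans (ell u e * ell e l * (dv e * dv v))).
  have -> : ell u e * ell e v * (ell v e * ell e l) = ell u e * ell e l * (ell e v * ell v e).
    by lia.
  by rewrite ltn_pmul2l ?muln_gt0 ?ell_ue_gt0.
have -> : ell u l * dv v * (dv e * dv e) = ell u l * dv e * (dv e * dv v) by lia.
by rewrite leq_mul2r le_e orbT.
Qed.

Lemma ell_mul_lt_toward u v l : is_node adj u -> is_node adj v -> v != u ->
  ~~ is_node adj l -> first_step v u \in seg v l -> ell u v * ell v l < ell u l * dv v.
Proof.
move=> u_node; have [n] := ubnP (size (gpath v u)); elim: n v => // n IH v.
rewrite ltnS => size_vu v_node v_neq_u l_leaf step_vl.
have ve := first_step_adj v_neq_u; have e_node := first_step_node u_node v_neq_u.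
have e_vu := mem_first_step v_neq_u.
move: (first_step v u) ve e_node e_vu step_vl => e ve e_node e_vu e_vl.
apply: (ell_mul_lt_step v_node ve e_node l_leaf e_vu e_vl).
have [-> | e_neq_u] := eqVneq e u; first by rewrite ell_id mulnC.
have [step_el | step_el] := boolP (first_step e u \in seg e l).
  apply/ltnW/IH => //.
  by move: size_vu; rewrite (gpath_cat e_vu) gpath_adj.
rewrite (ell_mul e_node (mem_seg_first_step _)) //.
apply: contraNneq step_el => ->; apply: mem_first_step.
by apply: contraNneq l_leaf => <-.
Qed.

Variable a : V -> V -> V -> nat.
Hypothesis alpha : alpha_cond adj d a.

Local Notation w_ u := (wvec adj d u).
Local Notation mexp := (mexp adj a).

Lemma wdot_mexp u v x : wdot (w_ u) (mexp v x) =
  \sum_(l : leafT adj | x \in seg v (val l)) ell u (val l) * a v x (val l).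
Proof.
rewrite /wdot [RHS]big_mkcond; apply: eq_bigr => l _.
by rewrite ffunE /wvec geodbE; case: ifP; rewrite ?muln0.
Qed.

Lemma leaf_not_node (l : leafT adj) : ~~ is_node adj (val l).
Proof. by have := valP l; rewrite /is_leaf /is_node => /eqP ->. Qed.

Lemma alpha_seg v x : is_node adj v -> adj v x ->
  dv v = \sum_(l : leafT adj | x \in seg v (val l)) a v x (val l) * ell v (val l).
Proof.
by move=> v_node vx; rewrite (alpha v_node vx); apply: eq_bigl => l; rewrite geodbE.
Qed.

Lemma sum_alpha_gt0 v x : is_node adj v -> adj v x ->
  0 < \sum_(l : leafT adj | x \in seg v (val l)) a v x (val l).
Proof.
move=> v_node vx; have := dv_gt0 v_node; rewrite (alpha_seg v_node vx) !lt0n.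
by apply: contra; rewrite !sum_nat_eq0 => /forall_inP a0; apply/forall_inP => l /a0 /eqP ->.
Qed.

Lemma wdot_mexp_self v x : is_node adj v -> adj v x -> wdot (w_ v) (mexp v x) = dv v.
Proof.
move=> v_node vx; rewrite wdot_mexp (alpha_seg v_node vx).
by apply: eq_bigr => l _; rewrite mulnC.
Qed.

Lemma wdot_mexp_away u v x : is_node adj v -> v != u -> adj v x ->
  x != first_step v u -> wdot (w_ u) (mexp v x) = ell u v.
Proof.
move=> v_node v_neq_u vx x_neq_e.
apply/eqP; rewrite -(eqn_pmul2r (dv_gt0 v_node)); apply/eqP.
rewrite wdot_mexp big_distrl [in RHS](alpha_seg v_node vx) big_distrr /=.
apply: eq_bigr => l x_vl.
have v_ul : v \in seg u (val l).
  by apply: mem_seg_first_step; rewrite (first_step_eq vx x_vl) eq_sym.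
by rewrite mulnAC (ell_mul v_node v_ul) -mulnA [ell v _ * _]mulnC.
Qed.

Lemma wdot_mexp_toward u v : is_node adj u -> is_node adj v -> v != u ->
  ell u v < wdot (w_ u) (mexp v (first_step v u)).
Proof.
move=> u_node v_node v_neq_u; have ve := first_step_adj v_neq_u.
rewrite -(ltn_pmul2r (dv_gt0 v_node)) wdot_mexp big_distrl /=.
rewrite [in X in X < _](alpha_seg v_node ve) big_distrr /=.
under eq_bigr do rewrite mulnCA.
under [X in _ < X]eq_bigr do rewrite mulnAC mulnC.
apply: ltn_sum_scaled; last exact: sum_alpha_gt0.
by move=> l; apply: ell_mul_lt_toward; rewrite ?leaf_not_node.
Qed.

Lemma mexp_neq v x y : is_node adj v -> adj v x -> adj v y -> x != y ->
  mexp v x != mexp v y.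
Proof.
move=> v_node vx vy x_neq_y.
have := sum_alpha_gt0 v_node vx; rewrite lt0n sum_nat_eq0 => /forall_inPn[l x_vl al_neq0].
have {}x_vl : x \in seg v (val l) := x_vl.
apply: contra_neq al_neq0 => /ffunP/(_ l); rewrite !ffunE !geodbE x_vl.
case: ifP => // y_vl _; move: x_neq_y.
by rewrite -(first_step_eq vx x_vl) -(first_step_eq vy y_vl) eqxx.
Qed.

Section SpliceTypeSystem.
Variables (C : numClosedFieldType) (c : V -> V -> nat -> C).
Variable g : V -> nat -> pser (leafT adj) C.
Hypothesis minors : minors_cond adj c.
Hypothesis g_above : g_cond d a g.
Local Open Scope ring_scope.

Local Notation fpart := (fpart adj c a).
Local Notation Fsys := (Fsys adj c a g).

Lemma coef_nonzero_off v i e : is_node adj v -> (i < valency adj v - 2)%N ->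
  exists x, [/\ adj v x, x != e & c v x i != 0].
Proof.
move=> v_node lt_i.
have [/existsP[x /and3P[vx x_neq_e cx]] | none] :=
  boolP [exists x, [&& adj v x, x != e & c v x i != 0]]; first by exists x.
have lt_nodes : (valency adj v - 2 < valency adj v)%N by move: v_node; rewrite /is_node; lia.
have [f [f_inj f_avoid]] := exists_inj_avoid (index e (nbrs adj v)) lt_nodes.
exfalso; move/negP: (minors v_node f_inj); apply; apply/eqP.
rewrite (expand_det_col _ (Ordinal lt_i)) big1 // => r _; rewrite mxE.
set x := nth v (nbrs adj v) (f r).
have fr_lt : (f r < size (nbrs adj v))%N by rewrite /nbrs -cardE ltn_ord.
have vx : adj v x by have := mem_nth v fr_lt; rewrite /nbrs mem_enum inE.
have x_neq_e : x != e.
  by apply: contraNneq (f_avoid r) => <-; rewrite index_uniq ?enum_uniq.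
by move/existsPn: none => /(_ x); rewrite vx x_neq_e negbK => /eqP ->; rewrite mul0r.
Qed.

Lemma fpart_supp v i m : fpart v i m != 0 -> exists2 x, adj v x & m = mexp v x.
Proof.
have [/existsP[x /andP[vx /eqP m_x]] _ | none] :=
  boolP [exists x, adj v x && (m == mexp v x)]; first by exists x.
rewrite /fpart big1 ?eqxx // => x vx.
by move/existsPn: none => /(_ x); rewrite vx /pmono /= => /negbTE ->; rewrite mulr0.
Qed.

Lemma fpart_mexp v i x : is_node adj v -> adj v x -> fpart v i (mexp v x) = c v x i.
Proof.
move=> v_node vx; rewrite /fpart (bigD1 x) //= big1 => [|y /andP[vy y_neq_x]].
  by rewrite /pmono eqxx mulr1 addr0.
by rewrite /pmono ifN ?mulr0 // mexp_neq // eq_sym.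
Qed.

Lemma initial_Fsys_self v i : is_node adj v -> (i < valency adj v - 2)%N ->
  initial (w_ v) (Fsys v i) = fpart v i.
Proof.
move=> v_node lt_i; have [_ g_v] := g_above v_node lt_i.
apply: (initial_homog_add (mu := dv v)).
- by move=> m /fpart_supp[x vx ->]; rewrite wdot_mexp_self.
- have [x [vx _ cx]] := coef_nonzero_off v v_node lt_i.
  by exists (mexp v x); rewrite fpart_mexp.
- by move=> m /g_v[].
Qed.

Lemma initial_Fsys_other u v i : is_node adj u -> is_node adj v -> u != v ->
  (i < valency adj v - 2)%N ->
  let e := first_step v u in
  initial (w_ u) (Fsys v i) = (fun m => fpart v i m - c v e i * pmono (mexp v e) m).
Proof.
move=> u_node v_node u_neq_v lt_i e; have [_ g_v] := g_above v_node lt_i.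
have v_neq_u : v != u by rewrite eq_sym.
have ve : adj v e := first_step_adj v_neq_u.
set f := fun m => _.
have -> : Fsys v i = fun m => f m + (c v e i * pmono (mexp v e) m + g v i m).
  by apply: functional_extensionality => m; rewrite /Fsys /f addrA subrK.
apply: (initial_homog_add (mu := ell u v)).
- move=> m; rewrite /f; have [-> | m_neq_e] := eqVneq m (mexp v e).
    by rewrite fpart_mexp // /pmono eqxx mulr1 subrr eqxx.
  rewrite /pmono (negbTE m_neq_e) mulr0 subr0 => /fpart_supp[x vx m_x].
  by rewrite m_x wdot_mexp_away //; apply: contra_neq m_neq_e => x_e; rewrite m_x x_e.
- have [x [vx x_neq_e cx]] := coef_nonzero_off e v_node lt_i.
  exists (mexp v x); rewrite /f fpart_mexp // /pmono ifN ?mexp_neq //.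
  by rewrite mulr0 subr0.
- move=> m; have [-> _ | m_neq_e] := eqVneq m (mexp v e).
    exact: wdot_mexp_toward.
  rewrite /pmono (negbTE m_neq_e) mulr0 add0r => /g_v[_]; apply=> //.
Qed.

End SpliceTypeSystem.
End LinkingNumbers.
End Geodesics.

Local Open Scope ring_scope.

Theorem proposition2p18 (V : finType) (adj : rel V) (d : V -> V -> nat)
  (C : numClosedFieldType) (c : V -> V -> nat -> C) (a : V -> V -> V -> nat)
  (g : V -> nat -> pser (leafT adj) C) :
  is_splice_diagram adj ->
  (forall v x, is_node adj v -> adj v x -> (0 < d v x)%N) ->
  edge_det_cond adj d ->
  semigroup_cond adj d ->
  is_splice_type_system d c a g ->
  forall (u v : V) (i : nat), is_node adj u -> is_node adj v ->
    (i < valency adj v - 2)%N ->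
    (u = v -> initial (wvec adj d u) (Fsys adj c a g v i) = fpart adj c a v i) /\
    (u <> v -> exists e : V,
       [/\ adj v e, geod adj v u e,
           (forall e', adj v e' -> geod adj v u e' -> e' = e) &
           initial (wvec adj d u) (Fsys adj c a g v i) =
             (fun m => fpart adj c a v i m - c v e i * pmono (mexp adj a v e) m)]).
Proof.
move=> [tree _ no_valency2] d_gt0 edge_det _.
case=> alpha minors g_above u v i u_node v_node lt_i; split=> [-> | /eqP u_neq_v].
  exact: initial_Fsys_self.
have v_neq_u : v != u by rewrite eq_sym.
exists (first_step tree v u); split.
- exact: first_step_adj.
- exact/geodP/mem_first_step.
- by move=> e' ve' /(geodP tree) e'_vu; rewrite (first_step_eq ve' e'_vu).
- exact: initial_Fsys_other.
Qed.
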